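(* In the setting of the context, $K_1(\theta_0,\theta_0+c)\downarrow K_1$ and $K_1(\theta_0-c,\theta_0)\downarrow K_1$ as $c\downarrow0$.
   Context: Let $G\in\mathrm{C}^2(\mathbb{R})$ be coercive ($G(p)\to\infty$ as $p\to\pm\infty$), $p_1<p_2$ with $G'(p_1)<0<G'(p_2)$, $L=\frac{G'(p_2)}{G'(p_2)-G'(p_1)}$, $\ell\in(0,\min\{L,1-L\})$, and $K_1=\max\{|G'(p)|:\,p\in[p_1,p_2]\}$. Let $f$ be a $1$-periodic function in $\mathrm{C}^1(\mathbb{R})$ with $f'$ Lipschitz, $p_1\le f\le p_2$, $f=p_1$ on $[0,L-\ell]$, $f=p_2$ on $[L,1-\ell]$, and $\int_0^1G'(f(x))dx=0$. Define the $1$-periodic Lipschitz potential $V(x)=-f'(x)-G(f(x))$ and $\theta_0=\int_0^1f(x)dx$. For each $\theta\in\mathbb{R}$, $f_\theta\in\mathrm{C}^1(\mathbb{R})$ denotes the unique $1$-periodic function with $\int_0^1f_\theta=\theta$ and $f_\theta'+G(f_\theta)+V=\overline{H}(\theta)$ on $\mathbb{R}$ for some (unique) constant $\overline{H}(\theta)$. For $\theta_1<\theta_2$, $K_1(\theta_1,\theta_2)=\max\{|G'(p)|:\,\min_{[0,1]}f_{\theta_1}\le p\le\max_{[0,1]}f_{\theta_2}\}$. *)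

From Stdlib Require Import Reals.
From Coquelicot Require Import Coquelicot.
Open Scope R_scope.

Definition Kmax (G : R -> R) (a b : R) : R :=
  real (Lub_Rbar (fun y => exists p, a <= p <= b /\ y = Rabs (Derive G p))).

Definition fmin01 (g : R -> R) : R :=
  real (Glb_Rbar (fun y => exists x, 0 <= x <= 1 /\ y = g x)).
Definition fmax01 (g : R -> R) : R :=
  real (Lub_Rbar (fun y => exists x, 0 <= x <= 1 /\ y = g x)).

Definition K1th (G : R -> R) (F : R -> R -> R) (t1 t2 : R) : R :=
  Kmax G (fmin01 (F t1)) (fmax01 (F t2)).

Definition periodic1 (g : R -> R) : Prop := forall x, g (x + 1) = g x.

Definition isC1 (g : R -> R) : Prop :=
  forall x, ex_derive g x /\ continuous (Derive g) x.

Definition decr_to_at_0 (k : R -> R) (l : R) : Prop :=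
  (forall c c', 0 < c -> c <= c' -> k c <= k c') /\
  filterlim k (at_right 0) (locally l).

From Stdlib Require Import Reals Lra FunctionalExtensionality.
From Coquelicot Require Import Coquelicot.
Open Scope R_scope.

(* The difference d of two periodic solutions g <= h (by mean) satisfies
   d' = (Hh - Hg) - (G h - G g) with |G h - G g| <= M |d|.  By Gronwall, a
   negative value of d persists forwards (if Hh < Hg) or backwards (if
   Hg <= Hh), which periodicity and the nonnegative mean of d forbid; so the
   f_theta increase with theta.  At a minimum of d the derivative vanishes,
   giving Hh - Hg <= M * mean d, and Gronwall over one period then yields
   0 <= f_theta' - f_theta <= C (theta' - theta).  Hence max f_(theta0+c)
   decreases to max f_theta0 = p2 and min f_(theta0-c) increases to
   min f_theta0 = p1, and K_1 is the maximum of the continuous |G'| over an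
   interval whose endpoints move monotonically and continuously. *)

Definition sup_on (g : R -> R) (a b : R) : R :=
  real (Lub_Rbar (fun y => exists p, a <= p <= b /\ y = g p)).

Definition inf_on (g : R -> R) (a b : R) : R :=
  real (Glb_Rbar (fun y => exists p, a <= p <= b /\ y = g p)).

Lemma sup_on_eq_max (g : R -> R) (a b p : R) :
  a <= p <= b -> (forall q, a <= q <= b -> g q <= g p) -> sup_on g a b = g p.
Proof.
  intros hp hmax. unfold sup_on.
  rewrite (is_lub_Rbar_unique _ (g p)); [reflexivity|]. split.
  - intros y [q [hq ->]]. apply hmax, hq.
  - intros l hl. apply hl. exists p. auto.
Qed.

Lemma inf_on_opp (g : R -> R) (a b : R) :
  inf_on g a b = - sup_on (fun p => - g p) a b.
Proof.
  unfold inf_on, sup_on.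
  rewrite (is_glb_Rbar_unique _
            (Rbar_opp (Lub_Rbar (fun y => exists p, a <= p <= b /\ y = - g p)))).
  - destruct (Lub_Rbar _); simpl; ring.
  - apply is_lub_Rbar_opp. rewrite Rbar_opp_involutive.
    rewrite (Lub_Rbar_eqset _ (fun x => exists p, a <= p <= b /\ - x = g p)).
    + apply Lub_Rbar_correct.
    + intro y. split; intros [p [hp e]]; exists p; split; auto; lra.
Qed.

Lemma inf_on_eq_min (g : R -> R) (a b p : R) :
  a <= p <= b -> (forall q, a <= q <= b -> g p <= g q) -> inf_on g a b = g p.
Proof.
  intros hp hmin. rewrite inf_on_opp, (sup_on_eq_max _ _ _ p hp); [ring|].
  intros q hq. apply Ropp_le_contravar, hmin, hq.
Qed.

Lemma sup_on_opp (g : R -> R) (a b : R) :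
  sup_on g a b = sup_on (fun p => g (- p)) (- b) (- a).
Proof.
  unfold sup_on. f_equal. apply Lub_Rbar_eqset. intro y. split.
  - intros [p [hp ->]]. exists (- p). rewrite Ropp_involutive. split; [lra|reflexivity].
  - intros [p [hp ->]]. exists (- p). split; [lra|reflexivity].
Qed.

Section ContinuousExtrema.

Variable g : R -> R.
Hypothesis g_cont : forall x, continuous g x.

Lemma sup_on_max (a b : R) : a <= b ->
  exists p, a <= p <= b /\ sup_on g a b = g p /\ forall q, a <= q <= b -> g q <= g p.
Proof.
  intro hab.
  destruct (continuity_ab_maj g a b hab) as [p [hmax hp]].
  { intros x _. apply continuity_pt_filterlim, g_cont. }
  exists p. split; [exact hp|]. split; [apply sup_on_eq_max|]; auto.
Qed.

Lemma inf_on_min (a b : R) : a <= b ->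
  exists p, a <= p <= b /\ inf_on g a b = g p /\ forall q, a <= q <= b -> g p <= g q.
Proof.
  intro hab.
  destruct (continuity_ab_min g a b hab) as [p [hmin hp]].
  { intros x _. apply continuity_pt_filterlim, g_cont. }
  exists p. split; [exact hp|]. split; [apply inf_on_eq_min|]; auto.
Qed.

Lemma sup_on_ge (a b p : R) : a <= p <= b -> g p <= sup_on g a b.
Proof.
  intro hp. destruct (sup_on_max a b) as [q [_ [-> hq]]]; [lra|]. auto.
Qed.

Lemma inf_on_le (a b p : R) : a <= p <= b -> inf_on g a b <= g p.
Proof.
  intro hp. destruct (inf_on_min a b) as [q [_ [-> hq]]]; [lra|]. auto.
Qed.

Lemma sup_on_le_sup_on (a b a' b' : R) :
  a' <= a -> a <= b -> b <= b' -> sup_on g a b <= sup_on g a' b'.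
Proof.
  intros ha hab hb. destruct (sup_on_max a b hab) as [p [hp [-> _]]].
  apply sup_on_ge. lra.
Qed.

Lemma sup_on_right_cont (a b eps : R) : a <= b -> 0 < eps ->
  exists del, 0 < del /\ forall b', b <= b' <= b + del -> sup_on g a b' <= sup_on g a b + eps.
Proof.
  intros hab heps.
  destruct (proj1 (filterlim_locally g (g b)) (g_cont b) (mkposreal eps heps)) as [del hdel].
  exists (del / 2). split; [apply is_pos_div_2|]. intros b' hb'.
  destruct (sup_on_max a b') as [p [hp [-> _]]]; [lra|].
  destruct (Rle_or_lt p b) as [hpb|hpb].
  - assert (g p <= sup_on g a b) by (apply sup_on_ge; lra). lra.
  - assert (hgp : Rabs (g p - g b) < eps).
    { apply (hdel p). change (Rabs (p - b) < del). rewrite Rabs_right; lra. }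
    assert (g b <= sup_on g a b) by (apply sup_on_ge; lra).
    apply Rabs_def2 in hgp. lra.
Qed.

End ContinuousExtrema.

Lemma sup_on_le_sup_on_add (g1 g2 : R -> R) (a b e : R) :
  (forall x, continuous g1 x) -> (forall x, continuous g2 x) -> a <= b ->
  (forall x, a <= x <= b -> g1 x <= g2 x + e) -> sup_on g1 a b <= sup_on g2 a b + e.
Proof.
  intros hg1 hg2 hab hle. destruct (sup_on_max g1 hg1 a b hab) as [p [hp [-> _]]].
  apply Rle_trans with (g2 p + e); [auto|]. apply Rplus_le_compat_r, sup_on_ge; auto.
Qed.

Lemma inf_on_le_inf_on_add (g1 g2 : R -> R) (a b e : R) :
  (forall x, continuous g1 x) -> (forall x, continuous g2 x) -> a <= b ->
  (forall x, a <= x <= b -> g2 x <= g1 x + e) -> inf_on g2 a b <= inf_on g1 a b + e.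
Proof.
  intros hg1 hg2 hab hle. destruct (inf_on_min g1 hg1 a b hab) as [p [hp [-> _]]].
  apply Rle_trans with (g2 p); [apply inf_on_le; auto|auto].
Qed.

Lemma decr_to_at_0_sup_on (g m : R -> R) (a b C : R) :
  (forall x, continuous g x) -> a <= b -> 0 <= C ->
  (forall c c', 0 < c -> c <= c' -> m c <= m c') ->
  (forall c, 0 < c -> b <= m c) ->
  (forall c, 0 < c <= 1 -> m c <= b + C * c) ->
  decr_to_at_0 (fun c => sup_on g a (m c)) (sup_on g a b).
Proof.
  intros hg hab hC hmono hlow hup. split.
  - intros c c' hc hcc'. apply sup_on_le_sup_on; auto; try lra.
    specialize (hlow c hc). lra.
  - apply filterlim_locally. intros [eps heps].
    destruct (sup_on_right_cont g hg a b (eps / 2) hab) as [del [hdel hsup]]; [lra|].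
    assert (heta : 0 < Rmin 1 (del / (C + 1))).
    { apply Rmin_glb_lt; [lra|]. apply Rdiv_lt_0_compat; lra. }
    exists (mkposreal _ heta). intros c hc hc0.
    change (Rabs (c - 0) < Rmin 1 (del / (C + 1))) in hc.
    rewrite Rminus_0_r, Rabs_right in hc by lra.
    assert (hc1 : c <= 1) by (pose proof (Rmin_l 1 (del / (C + 1))); lra).
    assert (hCc : C * c <= del).
    { assert (c * (C + 1) < del).
      { apply Rlt_div_r; [lra|]. pose proof (Rmin_r 1 (del / (C + 1))). lra. }
      nra. }
    assert (hb : b <= m c <= b + del).
    { split; [apply hlow; lra|]. specialize (hup c (conj hc0 hc1)). lra. }
    assert (sup_on g a b <= sup_on g a (m c)) by (apply sup_on_le_sup_on; auto; lra).
    specialize (hsup (m c) hb).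
    change (Rabs (sup_on g a (m c) - sup_on g a b) < eps).
    rewrite Rabs_right; lra.
Qed.

Lemma periodic1_shift (g : R -> R) : periodic1 g -> forall k x, g (x + IZR k) = g x.
Proof.
  intros hg k. induction k as [|k IH|k IH] using Z.peano_ind; intro x.
  - rewrite Rplus_0_r. reflexivity.
  - rewrite succ_IZR, <- Rplus_assoc, hg. apply IH.
  - rewrite <- Z.sub_1_r, minus_IZR, <- (IH x), <- hg. f_equal. ring.
Qed.

Lemma periodic1_frac_part (g : R -> R) : periodic1 g -> forall x, g x = g (frac_part x).
Proof.
  intros hg x. unfold frac_part. rewrite <- (periodic1_shift g hg (Int_part x) (x - _)).
  f_equal. ring.
Qed.

Lemma RInt_01_const (c : R) : RInt (fun _ => c) 0 1 = c.
Proof. rewrite RInt_const. unfold scal; simpl; unfold mult; simpl. ring. Qed.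

Section PeriodicExtrema.

Variable g : R -> R.
Hypothesis g_per : periodic1 g.
Hypothesis g_cont : forall x, continuous g x.

Lemma periodic1_bounds x : inf_on g 0 1 <= g x <= sup_on g 0 1.
Proof.
  rewrite (periodic1_frac_part g g_per x). pose proof (base_fp x).
  split; [apply inf_on_le|apply sup_on_ge]; auto; lra.
Qed.

Lemma periodic1_ex_min : exists x0, 0 <= x0 <= 1 /\ forall z, g x0 <= g z.
Proof.
  destruct (inf_on_min g g_cont 0 1) as [x0 [hx0 [e _]]]; [lra|].
  exists x0. split; [exact hx0|]. intro z. rewrite <- e. apply periodic1_bounds.
Qed.

Lemma RInt_01_le_sup_on : RInt g 0 1 <= sup_on g 0 1.
Proof.
  rewrite <- (RInt_01_const (sup_on g 0 1)).
  apply RInt_le; [lra| |apply ex_RInt_const|].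
  - apply (ex_RInt_continuous (V := R_CompleteNormedModule)). auto.
  - intros x hx. apply sup_on_ge; auto; lra.
Qed.

Lemma inf_on_le_RInt_01 : inf_on g 0 1 <= RInt g 0 1.
Proof.
  rewrite <- (RInt_01_const (inf_on g 0 1)).
  apply RInt_le; [lra|apply ex_RInt_const| |].
  - apply (ex_RInt_continuous (V := R_CompleteNormedModule)). auto.
  - intros x hx. apply inf_on_le; auto; lra.
Qed.

End PeriodicExtrema.

Lemma nonincreasing_of_derive_nonpos (phi dphi : R -> R) (a b : R) :
  (forall t, is_derive phi t (dphi t)) -> a <= b ->
  (forall t, a < t < b -> dphi t <= 0) -> phi b <= phi a.
Proof.
  intros hd hab hneg. destruct (Req_dec a b) as [<-|hne]; [lra|].
  destruct (MVT_cor2 phi dphi a b) as [c [e hc]]; [lra| |].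
  - intros c _. apply is_derive_Reals, hd.
  - assert (dphi c * (b - a) <= 0) by (apply Rmult_le_0_r; [apply hneg|]; lra).
    lra.
Qed.

Lemma gronwall (phi dphi : R -> R) (M a b : R) :
  (forall t, is_derive phi t (dphi t)) -> a <= b ->
  (forall t, a < t < b -> dphi t <= M * phi t) ->
  phi b <= phi a * exp (M * (b - a)).
Proof.
  intros hd hab hle.
  assert (hpsi : forall t, is_derive (fun t => phi t * exp (- M * t)) t
                              ((dphi t - M * phi t) * exp (- M * t))).
  { intro t. auto_derive; [exists (dphi t); apply hd|].
    replace (Derive _ t) with (dphi t) by (symmetry; apply is_derive_unique, hd). ring. }
  pose proof (nonincreasing_of_derive_nonpos _ _ a b hpsi hab) as hmono.
  assert (h : phi b * exp (- M * b) <= phi a * exp (- M * a)).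
  { apply hmono. intros t ht. pose proof (exp_pos (- M * t)).
    pose proof (hle t ht). nra. }
  apply Rmult_le_compat_r with (r := exp (M * b)) in h; [|left; apply exp_pos].
  rewrite Rmult_assoc, <- exp_plus in h.
  replace (- M * b + M * b) with 0 in h by ring. rewrite exp_0, Rmult_1_r in h.
  rewrite Rmult_assoc, <- exp_plus in h.
  replace (- M * a + M * b) with (M * (b - a)) in h by ring. exact h.
Qed.

Lemma derive_eq_0_at_min (d dd : R -> R) (x0 : R) :
  (forall t, is_derive d t (dd t)) -> (forall z, d x0 <= d z) -> dd x0 = 0.
Proof.
  intros hd hmin.
  set (pr := exist _ (dd x0) (proj1 (is_derive_Reals d x0 (dd x0)) (hd x0))
             : derivable_pt d x0).
  apply (deriv_minimum d (x0 - 1) (x0 + 1) x0 pr); [lra|lra|]. auto.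
Qed.

Lemma continuous_neg_near (d : R -> R) (s : R) : continuous d s -> d s < 0 ->
  exists del : posreal, forall u, Rabs (u - s) < del -> d u < 0.
Proof.
  intros hd hneg.
  destruct (proj1 (filterlim_locally d (d s)) hd (mkposreal _ (Ropp_0_gt_lt_contravar _ hneg)))
    as [del hdel].
  exists del. intros u hu. specialize (hdel u hu).
  change (Rabs (d u - d s) < - d s) in hdel. apply Rabs_def2 in hdel. lra.
Qed.

Lemma ex_first_nonneg (d : R -> R) (x y : R) :
  (forall t, continuous d t) -> x <= y -> d x < 0 -> 0 <= d y ->
  exists s, x < s <= y /\ 0 <= d s /\ forall t, x <= t < s -> d t < 0.
Proof.
  intros hd hxy hx hy.
  set (E := fun t => x <= t <= y /\ forall u, x <= u <= t -> d u < 0).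
  assert (hEx : E x).
  { split; [lra|]. intros u hu. replace u with x by lra. exact hx. }
  destruct (completeness E) as [s [hub hlub]].
  { exists y. intros t [ht _]. lra. }
  { exists x. exact hEx. }
  assert (hxs : x <= s) by (apply hub, hEx).
  assert (hsy : s <= y) by (apply hlub; intros t [ht _]; lra).
  assert (hbelow : forall t, x <= t < s -> d t < 0).
  { intros t ht. destruct (Rlt_or_le (d t) 0) as [|hge]; [assumption|exfalso].
    assert (is_upper_bound E t).
    { intros u [hu hneg]. destruct (Rle_or_lt u t) as [|hlt]; [assumption|].
      specialize (hneg t). lra. }
    assert (s <= t) by (apply hlub; assumption). lra. }
  assert (hs : 0 <= d s).
  { destruct (Rle_or_lt 0 (d s)) as [|hneg]; [assumption|exfalso].
    destruct (continuous_neg_near d s (hd s) hneg) as [del hnear].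
    assert (hsy' : s < y) by (destruct (Req_dec s y) as [->|]; lra).
    set (t := Rmin (s + del / 2) y).
    assert (hts : s < t).
    { apply Rmin_glb_lt; [pose proof (cond_pos del)|]; lra. }
    assert (htle : t <= s + del / 2 /\ t <= y) by (split; [apply Rmin_l|apply Rmin_r]).
    assert (E t).
    { split; [lra|].
      intros u hu. destruct (Rlt_or_le u s) as [|hus]; [apply hbelow; lra|].
      apply hnear. pose proof (cond_pos del). rewrite Rabs_right; lra. }
    assert (t <= s) by (apply hub; assumption). lra. }
  exists s. split; [|split; assumption].
  split; [|assumption]. destruct (Req_dec x s) as [<-|]; lra.
Qed.

Lemma neg_persists_forward (d dd : R -> R) (K x y : R) :
  (forall t, is_derive d t (dd t)) -> (forall t, d t < 0 -> dd t <= K * d t) ->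
  x <= y -> d x < 0 -> d y < 0.
Proof.
  intros hd hle hxy hx. destruct (Rlt_or_le (d y) 0) as [|hy]; [assumption|exfalso].
  assert (hcont : forall t, continuous d t).
  { intro t. apply (ex_derive_continuous d t). exists (dd t). apply hd. }
  destruct (ex_first_nonneg d x y hcont hxy hx hy) as [s [hs [hds hbelow]]].
  assert (d s <= d x * exp (K * (s - x))).
  { apply gronwall with (dphi := dd); [assumption|lra|].
    intros t ht. apply hle, hbelow. lra. }
  pose proof (exp_pos (K * (s - x))). nra.
Qed.

Lemma neg_persists_backward (d dd : R -> R) (K x y : R) :
  (forall t, is_derive d t (dd t)) -> (forall t, d t < 0 -> K * d t <= dd t) ->
  x <= y -> d y < 0 -> d x < 0.
Proof.
  intros hd hle hxy hy.
  assert (hrev : forall t, is_derive (fun t => d (- t)) t (- dd (- t))).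
  { intro t. replace (- dd (- t)) with (scal (-1) (dd (- t)))
      by (unfold scal; simpl; unfold mult; simpl; ring).
    apply (is_derive_comp d Ropp); [apply hd|]. auto_derive; [exact I|ring]. }
  rewrite <- (Ropp_involutive x).
  apply (neg_persists_forward (fun t => d (- t)) (fun t => - dd (- t)) (- K) (- y));
    [exact hrev| |lra|].
  - intros t ht. specialize (hle (- t) ht). lra.
  - rewrite Ropp_involutive. exact hy.
Qed.

Lemma isC1_continuous (u : R -> R) : isC1 u -> forall x, continuous u x.
Proof. intros hu x. apply (ex_derive_continuous u x), hu. Qed.

Lemma isC1_is_derive (u : R -> R) : isC1 u -> forall x, is_derive u x (Derive u x).
Proof. intros hu x. apply Derive_correct, hu. Qed.

Section PeriodicSolutions.

Variables G V : R -> R.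
Hypothesis G_derive : forall p, ex_derive G p.
Hypothesis DG_cont : forall p, continuous (Derive G) p.

Lemma abs_DG_continuous p : continuous (fun p => Rabs (Derive G p)) p.
Proof. apply continuous_Rabs_comp, DG_cont. Qed.

Lemma Kmax_nonneg (a b : R) : a <= b -> 0 <= Kmax G a b.
Proof.
  intro hab. apply Rle_trans with (Rabs (Derive G a)); [apply Rabs_pos|].
  apply (sup_on_ge _ abs_DG_continuous). lra.
Qed.

Lemma Kmax_lipschitz (a b u v : R) :
  a <= u <= b -> a <= v <= b -> Rabs (G u - G v) <= Kmax G a b * Rabs (u - v).
Proof.
  intros hu hv.
  destruct (MVT_abs G (Derive G) v u) as [c [-> hc]].
  { intros c _. apply is_derive_Reals, Derive_correct, G_derive. }
  apply Rmult_le_compat_r; [apply Rabs_pos|].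
  apply (sup_on_ge _ abs_DG_continuous).
  split; [apply Rle_trans with (Rmin v u)|apply Rle_trans with (Rmax v u)];
    try apply Rmin_glb; try apply Rmax_lub; lra.
Qed.

Definition periodic_solution (u : R -> R) (H : R) : Prop :=
  periodic1 u /\ isC1 u /\ forall x, Derive u x + G (u x) + V x = H.

Lemma periodic_solution_bounds (u : R -> R) (H : R) :
  periodic_solution u H -> forall x, fmin01 u <= u x <= fmax01 u.
Proof.
  intros [hper [hC1 _]]. apply periodic1_bounds; [exact hper|]. apply isC1_continuous, hC1.
Qed.

Section SolutionPair.

Variables (g h : R -> R) (Hg Hh : R).
Hypothesis g_sol : periodic_solution g Hg.
Hypothesis h_sol : periodic_solution h Hh.

Let gap t := h t - g t.

Lemma gap_periodic : periodic1 gap.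
Proof.
  destruct g_sol as [hg _], h_sol as [hh _]. intro x. unfold gap. rewrite hg, hh. reflexivity.
Qed.

Lemma gap_continuous : forall t, continuous gap t.
Proof.
  destruct g_sol as [_ [hg _]], h_sol as [_ [hh _]]. intro t.
  apply (continuous_minus h g t); apply isC1_continuous; assumption.
Qed.

Lemma gap_is_derive t : is_derive gap t ((Hh - Hg) - (G (h t) - G (g t))).
Proof.
  destruct g_sol as [_ [hg eg]], h_sol as [_ [hh eh]].
  replace ((Hh - Hg) - (G (h t) - G (g t))) with (Derive h t - Derive g t)
    by (rewrite <- (eg t), <- (eh t); ring).
  apply (is_derive_minus h g t); apply isC1_is_derive; assumption.
Qed.

Lemma RInt_gap : RInt gap 0 1 = RInt h 0 1 - RInt g 0 1.
Proof.
  destruct g_sol as [_ [hg _]], h_sol as [_ [hh _]].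
  apply (RInt_minus h g 0 1); apply (ex_RInt_continuous (V := R_CompleteNormedModule));
    intros; apply isC1_continuous; assumption.
Qed.

Lemma ex_lipschitz_along :
  exists M, 0 <= M /\ forall t, Rabs (G (h t) - G (g t)) <= M * Rabs (h t - g t).
Proof.
  pose proof (periodic_solution_bounds g Hg g_sol) as bg.
  pose proof (periodic_solution_bounds h Hh h_sol) as bh.
  pose proof (Rmin_l (fmin01 g) (fmin01 h)). pose proof (Rmin_r (fmin01 g) (fmin01 h)).
  pose proof (Rmax_l (fmax01 g) (fmax01 h)). pose proof (Rmax_r (fmax01 g) (fmax01 h)).
  set (a := Rmin (fmin01 g) (fmin01 h)) in *. set (b := Rmax (fmax01 g) (fmax01 h)) in *.
  exists (Kmax G a b). split; [apply Kmax_nonneg; specialize (bg 0); lra|].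
  intro t. specialize (bg t). specialize (bh t). apply Kmax_lipschitz; lra.
Qed.

Lemma periodic_solution_le : RInt g 0 1 <= RInt h 0 1 -> forall x, g x <= h x.
Proof.
  intros hint x.
  destruct ex_lipschitz_along as [M [hM hlip]].
  destruct (sup_on_max gap gap_continuous 0 1) as [y [hy [hsup _]]]; [lra|].
  assert (hy0 : 0 <= gap y).
  { rewrite <- hsup. apply Rle_trans with (RInt gap 0 1); [rewrite RInt_gap; lra|].
    apply RInt_01_le_sup_on, gap_continuous. }
  enough (hfrac : 0 <= gap (frac_part x))
    by (rewrite <- (periodic1_frac_part gap gap_periodic x) in hfrac; unfold gap in hfrac; lra).
  pose proof (base_fp x) as hx.
  apply Rnot_lt_le. intro hneg.
  assert (hD : forall t, gap t < 0 -> - (- M * gap t) <= G (h t) - G (g t) <= - M * gap t).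
  { intros t ht. apply Rabs_le_between. specialize (hlip t). fold (gap t) in hlip.
    rewrite (Rabs_left (gap t)) in hlip by exact ht. lra. }
  destruct (Rle_or_lt Hg Hh) as [hH|hH].
  - assert (gap (y - 1) < 0).
    { apply (neg_persists_backward gap _ M (y - 1) (frac_part x) gap_is_derive);
        [|lra|exact hneg].
      intros t ht. specialize (hD t ht). lra. }
    rewrite <- gap_periodic in H. replace (y - 1 + 1) with y in H by ring. lra.
  - assert (gap (y + 1) < 0).
    { apply (neg_persists_forward gap _ (- M) (frac_part x) (y + 1) gap_is_derive);
        [|lra|exact hneg].
      intros t ht. specialize (hD t ht). lra. }
    rewrite gap_periodic in H. lra.
Qed.

Section Ordered.

Variable M : R.
Hypothesis M_nonneg : 0 <= M.
Hypothesis G_lipschitz : forall t, Rabs (G (h t) - G (g t)) <= M * Rabs (h t - g t).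
Hypothesis g_le_h : forall x, g x <= h x.

Lemma G_gap_between t : - (M * gap t) <= G (h t) - G (g t) <= M * gap t.
Proof.
  apply Rabs_le_between. specialize (G_lipschitz t). fold (gap t) in G_lipschitz.
  rewrite (Rabs_right (gap t)) in G_lipschitz by (specialize (g_le_h t); unfold gap; lra).
  exact G_lipschitz.
Qed.

Lemma solution_constant_diff_le (x0 : R) :
  (forall z, gap x0 <= gap z) -> Hh - Hg <= M * gap x0.
Proof.
  intro hmin. pose proof (derive_eq_0_at_min gap _ x0 gap_is_derive hmin) as h0.
  cbv beta in h0. pose proof (G_gap_between x0). lra.
Qed.

Lemma gap_le_over_period (x0 t : R) : (forall z, gap x0 <= gap z) -> x0 <= t <= x0 + 1 ->
  gap t <= 2 * RInt gap 0 1 * exp M.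
Proof.
  intros hmin ht. set (c := RInt gap 0 1).
  assert (hx0c : gap x0 <= c).
  { apply Rle_trans with (inf_on gap 0 1); [|apply inf_on_le_RInt_01, gap_continuous].
    destruct (inf_on_min gap gap_continuous 0 1) as [p [_ [-> _]]]; [lra|]. apply hmin. }
  assert (hx0pos : 0 <= gap x0) by (specialize (g_le_h x0); unfold gap; lra).
  pose proof (solution_constant_diff_le x0 hmin) as hH.
  assert (hgr : c + gap t <= (c + gap x0) * exp (M * (t - x0))).
  { apply (gronwall (fun t => c + gap t) (fun t => (Hh - Hg) - (G (h t) - G (g t))));
      [|lra|].
    - intro u. auto_derive; [eexists; apply gap_is_derive|].
      replace (Derive _ u) with ((Hh - Hg) - (G (h u) - G (g u)))
        by (symmetry; apply is_derive_unique, gap_is_derive). ring.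
    - intros u _. pose proof (G_gap_between u). nra. }
  assert (hexp : exp (M * (t - x0)) <= exp M).
  { assert (hle : M * (t - x0) <= M) by nra.
    destruct (Rle_lt_or_eq_dec _ _ hle) as [hlt| ->]; [left; apply exp_increasing, hlt|lra]. }
  pose proof (exp_pos (M * (t - x0))). nra.
Qed.

Lemma periodic_solution_gap_le x : h x - g x <= 2 * (RInt h 0 1 - RInt g 0 1) * exp M.
Proof.
  rewrite <- RInt_gap. change (gap x <= 2 * RInt gap 0 1 * exp M).
  destruct (periodic1_ex_min gap gap_periodic gap_continuous) as [x0 [hx0 hmin]].
  rewrite (periodic1_frac_part gap gap_periodic x). pose proof (base_fp x).
  destruct (Rle_or_lt x0 (frac_part x)).
  - apply (gap_le_over_period x0); [exact hmin|lra].
  - rewrite <- gap_periodic. apply (gap_le_over_period x0); [exact hmin|lra].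
Qed.

End Ordered.

End SolutionPair.

Section Family.

Variable F : R -> R -> R.
Hypothesis F_sol : forall th, exists H, periodic_solution (F th) H.
Hypothesis F_mean : forall th, RInt (F th) 0 1 = th.

Lemma family_continuous th x : continuous (F th) x.
Proof. destruct (F_sol th) as [H [_ [hC1 _]]]. apply isC1_continuous, hC1. Qed.

Lemma family_le t1 t2 : t1 <= t2 -> forall x, F t1 x <= F t2 x.
Proof.
  intro ht. destruct (F_sol t1) as [H1 s1], (F_sol t2) as [H2 s2].
  apply (periodic_solution_le _ _ _ _ s1 s2). rewrite !F_mean. exact ht.
Qed.

Lemma family_eq th u H : periodic_solution u H -> RInt u 0 1 = th -> F th = u.
Proof.
  intros hu hmean. destruct (F_sol th) as [H' hF].
  extensionality x. apply Rle_antisym;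
    [apply (periodic_solution_le _ _ _ _ hF hu)|apply (periodic_solution_le _ _ _ _ hu hF)];
    rewrite F_mean, hmean; lra.
Qed.

Lemma family_gap_le th : exists C, 0 <= C /\ forall t1 t2 x,
  th - 1 <= t1 -> t1 <= t2 -> t2 <= th + 1 -> F t2 x - F t1 x <= C * (t2 - t1).
Proof.
  set (a := fmin01 (F (th - 1))). set (b := fmax01 (F (th + 1))).
  assert (hrange : forall t x, th - 1 <= t <= th + 1 -> a <= F t x <= b).
  { intros t x ht. destruct (F_sol (th - 1)) as [H1 s1], (F_sol (th + 1)) as [H2 s2].
    split.
    - apply Rle_trans with (F (th - 1) x); [apply (periodic_solution_bounds _ _ s1)|].
      apply family_le. lra.
    - apply Rle_trans with (F (th + 1) x); [apply family_le; lra|].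
      apply (periodic_solution_bounds _ _ s2). }
  assert (hab : a <= b) by (destruct (hrange th 0); lra).
  exists (2 * exp (Kmax G a b)). split; [pose proof (exp_pos (Kmax G a b)); lra|].
  intros t1 t2 x h1 h12 h2.
  destruct (F_sol t1) as [H1 s1], (F_sol t2) as [H2 s2].
  replace (2 * exp (Kmax G a b) * (t2 - t1))
    with (2 * (RInt (F t2) 0 1 - RInt (F t1) 0 1) * exp (Kmax G a b)) by (rewrite !F_mean; ring).
  apply (periodic_solution_gap_le _ _ _ _ s1 s2); [apply Kmax_nonneg, hab| |apply family_le, h12].
  intro t. apply Kmax_lipschitz; apply hrange; lra.
Qed.

Lemma fmax01_family_le t1 t2 : t1 <= t2 -> fmax01 (F t1) <= fmax01 (F t2).
Proof.
  intro ht. rewrite <- (Rplus_0_r (fmax01 (F t2))).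
  apply sup_on_le_sup_on_add; try apply family_continuous; [lra|].
  intros x _. rewrite Rplus_0_r. apply family_le, ht.
Qed.

Lemma fmin01_family_le t1 t2 : t1 <= t2 -> fmin01 (F t1) <= fmin01 (F t2).
Proof.
  intro ht. rewrite <- (Rplus_0_r (fmin01 (F t2))).
  apply inf_on_le_inf_on_add; try apply family_continuous; [lra|].
  intros x _. rewrite Rplus_0_r. apply family_le, ht.
Qed.

Lemma fmin01_le_fmax01 th : fmin01 (F th) <= fmax01 (F th).
Proof. destruct (F_sol th) as [H hF]. destruct (periodic_solution_bounds _ _ hF 0). lra. Qed.

Lemma K1th_right_decr th : decr_to_at_0 (fun c => K1th G F th (th + c)) (K1th G F th th).
Proof.
  destruct (family_gap_le th) as [C [hC hgap]].
  apply (decr_to_at_0_sup_on _ (fun c => fmax01 (F (th + c))) _ _ C abs_DG_continuous);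
    [|exact hC| | |].
  - apply fmin01_le_fmax01.
  - intros c c' _ hcc'. apply fmax01_family_le. lra.
  - intros c hc. apply fmax01_family_le. lra.
  - intros c hc. apply sup_on_le_sup_on_add; try apply family_continuous; [lra|].
    intros x _. specialize (hgap th (th + c) x). lra.
Qed.

Lemma K1th_left_decr th : decr_to_at_0 (fun c => K1th G F (th - c) th) (K1th G F th th).
Proof.
  destruct (family_gap_le th) as [C [hC hgap]].
  (* Reflecting [p |-> - p] turns the moving left endpoint into a moving right one. *)
  set (g := fun p => Rabs (Derive G (- p))).
  replace (fun c => K1th G F (th - c) th)
    with (fun c => sup_on g (- fmax01 (F th)) (- fmin01 (F (th - c))))
    by (extensionality c; symmetry; apply sup_on_opp).
  replace (K1th G F th th) with (sup_on g (- fmax01 (F th)) (- fmin01 (F th)))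
    by (symmetry; apply sup_on_opp).
  apply (decr_to_at_0_sup_on _ (fun c => - fmin01 (F (th - c))) _ _ C);
    [|apply Ropp_le_contravar, fmin01_le_fmax01|exact hC| | |].
  - intro p. apply (continuous_comp (fun p => - p) (fun p => Rabs (Derive G p)));
      [|apply abs_DG_continuous].
    apply (ex_derive_continuous (fun p => - p)). auto_derive. exact I.
  - intros c c' _ hcc'. apply Ropp_le_contravar, fmin01_family_le. lra.
  - intros c hc. apply Ropp_le_contravar, fmin01_family_le. lra.
  - intros c hc. cut (fmin01 (F th) <= fmin01 (F (th - c)) + C * c); [lra|].
    apply inf_on_le_inf_on_add; try apply family_continuous; [lra|].
    intros x _. specialize (hgap (th - c) th x). lra.
Qed.

End Family.

End PeriodicSolutions.

Theorem lemma5p2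
  (G : R -> R) (p1 p2 l : R) (f V : R -> R) (F : R -> R -> R) :
  (* G in C^2 *)
  (forall p, ex_derive G p) ->
  (forall p, ex_derive (Derive G) p) ->
  (forall p, continuous (Derive (Derive G)) p) ->
  (* G coercive *)
  filterlim G (Rbar_locally p_infty) (Rbar_locally p_infty) ->
  filterlim G (Rbar_locally m_infty) (Rbar_locally p_infty) ->
  p1 < p2 -> Derive G p1 < 0 -> 0 < Derive G p2 ->
  let L := Derive G p2 / (Derive G p2 - Derive G p1) in
  0 < l -> l < Rmin L (1 - L) ->
  let K1 := Kmax G p1 p2 in
  (* f *)
  periodic1 f -> isC1 f ->
  (exists Lc, forall x y, Rabs (Derive f x - Derive f y) <= Lc * Rabs (x - y)) ->
  (forall x, p1 <= f x /\ f x <= p2) ->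
  (forall x, 0 <= x /\ x <= L - l -> f x = p1) ->
  (forall x, L <= x /\ x <= 1 - l -> f x = p2) ->
  RInt (fun x => Derive G (f x)) 0 1 = 0 ->
  (forall x, V x = - Derive f x - G (f x)) ->
  let theta0 := RInt f 0 1 in
  (* F theta = f_theta *)
  (forall theta, isC1 (F theta) /\ periodic1 (F theta) /\ RInt (F theta) 0 1 = theta /\
     exists H, forall x, Derive (F theta) x + G (F theta x) + V x = H) ->
  decr_to_at_0 (fun c => K1th G F theta0 (theta0 + c)) K1 /\
  decr_to_at_0 (fun c => K1th G F (theta0 - c) theta0) K1.
Proof.
  intros hG hDG _ _ _ _ _ _ L hl hlL K1 hfper hfC1 _ hfrange hfp1 hfp2 _ hV theta0 hF.
  assert (hDGc : forall p, continuous (Derive G) p).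
  { intro p. apply (ex_derive_continuous (Derive G)), hDG. }
  assert (hsol : forall th, exists H, periodic_solution G V (F th) H).
  { intro th. destruct (hF th) as [hC1 [hper [_ [H hH]]]]. exists H. split; [|split]; assumption. }
  assert (hmean : forall th, RInt (F th) 0 1 = th) by (intro th; apply hF).
  assert (hF0 : F theta0 = f).
  { apply (family_eq G V hG hDGc F hsol hmean theta0 f 0); [|reflexivity].
    split; [|split]; [assumption|assumption|]. intro x. rewrite hV. ring. }
  assert (hLl : l < L /\ l < 1 - L).
  { pose proof (Rmin_l L (1 - L)). pose proof (Rmin_r L (1 - L)). lra. }
  assert (hmin : fmin01 f = p1).
  { rewrite <- (hfp1 0) by lra. apply inf_on_eq_min; [lra|].
    intros q _. rewrite (hfp1 0) by lra. apply hfrange. }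
  assert (hmax : fmax01 f = p2).
  { rewrite <- (hfp2 L) by lra. apply sup_on_eq_max; [lra|].
    intros q _. rewrite (hfp2 L) by lra. apply hfrange. }
  assert (hK1 : K1 = K1th G F theta0 theta0) by (unfold K1th; rewrite hF0, hmin, hmax; reflexivity).
  rewrite hK1. split; [apply (K1th_right_decr G V)|apply (K1th_left_decr G V)]; assumption.
Qed.
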